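(* Let $E$ be a real Banach lattice. Then there is a lattice homomorphism $P:FBL[E]\to E$ with $P(\delta_x)=x$ for all $x\in E$; in particular $E$ is the range of the lattice projection $P$ (identifying $E$ with $\phi_E(E)=\{\delta_x:x\in E\}\subseteq FBL[E]$).
   Context: For a real Banach space $E$ with dual $E^*$ and closed unit ball $B_E$, let $H[E]$ be the vector space of all positively homogeneous functions $f:E^*\to\mathbb R$ ($f(\lambda x^* )=\lambda f(x^* )$ for $\lambda>0$). For $f\in H[E]$ put $\|f\|_{FBL[E]}:=\sup\{\sum_{k=1}^n|f(x_k^* )| : n\in\mathbb N,\ x_1^*,\dots,x_n^*\in E^*,\ \sup_{x\in B_E}\sum_{k=1}^n|x_k^*(x)|\le 1\}$. $H_0[E]:=\{f\in H[E]:\|f\|_{FBL[E]}<\infty\}$ is a Banach lattice with this norm and pointwise order/operations. For $x\in E$ let $\delta_x(x^* )=x^*(x)$. $FBL[E]$ is the closed sublattice of $H_0[E]$ generated by $\{\delta_x:x\in E\}$, and $\phi_E(x)=\delta_x$ (a linear isometry of $E$ into $FBL[E]$). *)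

From HB Require Import structures.
From mathcomp Require Import all_boot all_order all_algebra.
From mathcomp Require Import all_classical all_reals.
From mathcomp Require Import ereal topology normedtype.
Set Implicit Arguments. Unset Strict Implicit. Unset Printing Implicit Defensive.
Import Order.TTheory GRing.Theory Num.Theory.
Import numFieldNormedType.Exports.
Local Open Scope classical_set_scope.
Local Open Scope ring_scope.

Section FBL.
Variables (R : realType) (E : normedModType R).

Definition is_sup (le : E -> E -> Prop) (x y s : E) : Prop :=
  le x s /\ le y s /\ (forall z, le x z -> le y z -> le s z).

(* (E, le) is a (real) Banach lattice; completeness comes from the
   completeNormedModType structure in the theorem statement. *)
Definition banach_lattice (le : E -> E -> Prop) : Prop :=
  [/\ (forall x, le x x) /\
      (forall x y, le x y -> le y x -> x = y) /\
      (forall x y z, le x y -> le y z -> le x z),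
      (forall x y z, le x y -> le (x + z) (y + z)),
      (forall x y (a : R), le x y -> 0 <= a -> le (a *: x) (a *: y)),
      (forall x y, exists s, is_sup le x y s) &
      (forall x y ax ay, is_sup le x (- x) ax -> is_sup le y (- y) ay ->
          le ax ay -> `|x| <= `|y|)].

Definition is_dual (xs : E -> R) : Prop :=
  (forall (a : R) (x y : E), xs (a *: x + y) = a * xs x + xs y) /\
  (exists C : R, forall x, `|xs x| <= C * `|x|).

Definition dual := {xs : E -> R | is_dual xs}.

Definition pos_homogeneous (f : dual -> R) : Prop :=
  forall (a : R) (xs ys : dual), 0 < a ->
    (forall x, sval ys x = a * sval xs x) -> f ys = a * f xs.

Definition fbl_norm (f : dual -> R) : \bar R :=
  ereal_sup [set r : \bar R | exists (n : nat) (xs : 'I_n -> dual),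
     (forall x : E, `|x| <= 1 -> \sum_(k < n) `|sval (xs k) x| <= 1) /\
     r = (\sum_(k < n) `|f (xs k)|)%:E].

Definition lt_ereal (a b : \bar R) : Prop := (a < b)%E.

Definition H0 (f : dual -> R) : Prop :=
  pos_homogeneous f /\ (fbl_norm f < +oo)%E.

Definition delta (x : E) : dual -> R := fun xs => sval xs x.

Definition fbl_closed (S : (dual -> R) -> Prop) : Prop :=
  [/\ (forall x, S (delta x)),
      (forall f g, S f -> S g -> S (fun xs => f xs + g xs)),
      (forall (a : R) f, S f -> S (fun xs => a * f xs)),
      (forall f g, S f -> S g -> S (fun xs => Num.max (f xs) (g xs))) &
      (forall f, H0 f ->
         (forall e : R, 0 < e -> exists g, S g /\ lt_ereal (fbl_norm (fun xs => f xs - g xs)) e%:E) ->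
         S f)].

Definition FBL (f : dual -> R) : Prop :=
  H0 f /\ forall S, fbl_closed S -> S f.

End FBL.

(* The projection must send a lattice expression t(delta_x1, ..., delta_xn) to the
   value t(x1, ..., xn) computed in E, and the point is that this is contractive:
   ||t(x1, ..., xn)|| <= ||t(delta_x1, ..., delta_xn)||_FBL.  To see it, take a positive
   functional u with u(|x|) <= ||x|| and u(|z|) = ||z|| for z = t(x1, ..., xn), and use
   the Riesz decomposition property (obtained from Hahn-Banach) to split u into finitely
   many positive functionals w_i, each evaluating t like a lattice homomorphism.  Then
   sum_i |w_i x| <= u(|x|) <= ||x||, so the w_i are admissible in the FBL norm, while
   sum_i |t(w_i)| = sum_i w_i(|z|) = ||z||.  By completeness of E the map therefore
   extends to the FBL-closure of the lattice expressions, which is a closed sublattice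
   containing every delta_x, hence contains FBL[E]; the extension is a lattice
   homomorphism because it is one on lattice expressions. *)

From HB Require Import structures.
From mathcomp Require Import all_boot all_order all_algebra.
From mathcomp Require Import all_classical all_reals.
From mathcomp Require Import ereal topology normedtype.
From mathcomp Require Import ring lra.
Import Order.TTheory GRing.Theory Num.Theory.
Import numFieldNormedType.Exports.
Local Open Scope ring_scope.
Local Open Scope classical_set_scope.
Set Implicit Arguments. Unset Strict Implicit. Unset Printing Implicit Defensive.

(** * Hahn-Banach for sublinear functionals *)

Section LinearForms.
Variables (R : pzRingType) (V : lmodType R).

Definition linear_form (u : V -> R) :=
  forall (a : R) (x y : V), u (a *: x + y) = a * u x + u y.

Variables (u : V -> R) (lin_u : linear_form u).

Lemma linear_form0 : u 0 = 0.
Proof. by have := lin_u (-1) 0 0; rewrite scaler0 add0r mulN1r addNr. Qed.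

Lemma linear_formD x y : u (x + y) = u x + u y.
Proof. by rewrite -(scale1r x) lin_u mul1r scale1r. Qed.

Lemma linear_formZ a x : u (a *: x) = a * u x.
Proof. by rewrite -(addr0 (a *: x)) lin_u linear_form0 addr0. Qed.

Lemma linear_formN x : u (- x) = - u x.
Proof. by rewrite -scaleN1r linear_formZ mulN1r. Qed.

Lemma linear_formB x y : u (x - y) = u x - u y.
Proof. by rewrite linear_formD linear_formN. Qed.

End LinearForms.

Section HahnBanach.
Variables (R : realType) (V : lmodType R).

Definition sublinear (p : V -> R) :=
  (forall x y, p (x + y) <= p x + p y) /\
  (forall (a : R) x, 0 <= a -> p (a *: x) = a * p x).

Lemma sublinear0 p : sublinear p -> p 0 = 0.
Proof. by case=> _ hZ; rewrite -(scale0r (0 : V)) hZ // mul0r. Qed.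

Lemma sublinear_ge_oppN p x : sublinear p -> - p (- x) <= p x.
Proof. by move=> hp; have := hp.1 x (- x); rewrite addrN sublinear0 //; lra. Qed.

(* [shift q x] is a sublinear minorant of [q] with [shift q x (- x) <= - q x];
   hence a minimal sublinear functional is odd, i.e. linear. *)
Definition shift (q : V -> R) (x y : V) : R :=
  inf [set q (y + t *: x) - t * q x | t in [set t : R | 0 <= t]].

Section Shift.
Variables (q : V -> R) (x : V).
Hypothesis sub_q : sublinear q.

Lemma shift_lbound y t : 0 <= t -> - q (- y) <= q (y + t *: x) - t * q x.
Proof.
move=> t0; have := sub_q.1 (y + t *: x) (- y).
by rewrite addrC addKr sub_q.2 //; lra.
Qed.

Lemma shift_le y t : 0 <= t -> shift q x y <= q (y + t *: x) - t * q x.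
Proof.
move=> t0; apply: ge_inf; last by exists t.
by exists (- q (- y)) => _ [s s0 <-]; exact: shift_lbound.
Qed.

Lemma shift_ge y c :
  (forall t, 0 <= t -> c <= q (y + t *: x) - t * q x) -> c <= shift q x y.
Proof.
move=> hc; apply: lb_le_inf.
  by exists (q y); exists 0; rewrite //= scale0r addr0 mul0r subr0.
by move=> _ [t t0 <-]; exact: hc.
Qed.

Lemma shift_le_self y : shift q x y <= q y.
Proof. by have := shift_le y (lexx 0); rewrite scale0r addr0 mul0r subr0. Qed.

Lemma shift_oppr : shift q x (- x) <= - q x.
Proof.
by have := shift_le (- x) ler01; rewrite scale1r addNr sublinear0 // mul1r sub0r.
Qed.

Lemma shiftD y z : shift q x (y + z) <= shift q x y + shift q x z.
Proof.
suff h t s : 0 <= t -> 0 <= s ->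
    shift q x (y + z) <= (q (y + t *: x) - t * q x) + (q (z + s *: x) - s * q x).
  have hz t : 0 <= t -> shift q x (y + z) - (q (y + t *: x) - t * q x) <= shift q x z.
    by move=> t0; apply: shift_ge => s s0; have := h t s t0 s0; lra.
  have : shift q x (y + z) - shift q x z <= shift q x y.
    by apply: shift_ge => t t0; have := hz t t0; lra.
  lra.
move=> t0 s0; apply: le_trans (shift_le (y + z) (addr_ge0 t0 s0)) _.
have -> : y + z + (t + s) *: x = (y + t *: x) + (z + s *: x).
  by rewrite scalerDl addrACA.
by have := sub_q.1 (y + t *: x) (z + s *: x); lra.
Qed.

Lemma shiftZ (a : R) y : 0 < a -> shift q x (a *: y) = a * shift q x y.
Proof.
move=> a0; apply/eqP; rewrite eq_le; apply/andP; split.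
- rewrite -ler_pdivrMl //; apply: shift_ge => t t0; rewrite ler_pdivrMl //.
  have := shift_le (a *: y) (mulr_ge0 (ltW a0) t0).
  by rewrite -scalerA -scalerDr sub_q.2 ?(ltW a0) // mulrBr mulrA.
- apply: shift_ge => t t0.
  have e : y + (t / a) *: x = a^-1 *: (a *: y + t *: x).
    by rewrite scalerDr !scalerA mulVf ?gt_eqF // scale1r mulrC.
  have := ler_wpM2l (ltW a0) (shift_le y (divr_ge0 t0 (ltW a0))).
  rewrite e sub_q.2 ?invr_ge0 ?(ltW a0) //.
  suff -> : a * (a^-1 * q (a *: y + t *: x) - t / a * q x) =
    q (a *: y + t *: x) - t * q x by [].
  by field; rewrite gt_eqF.
Qed.

Lemma shift_sublinear : sublinear (shift q x).
Proof.
split; first exact: shiftD.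
move=> a y; rewrite le_eqVlt => /predU1P[<-|]; last exact: shiftZ.
rewrite scale0r mul0r; apply/eqP; rewrite eq_le; apply/andP; split.
  by apply: le_trans (shift_le_self 0) _; rewrite sublinear0.
by apply: shift_ge => t t0; rewrite add0r sub_q.2 //; lra.
Qed.

End Shift.

Lemma inf_sublinear_le (A : set (V -> R)) (q0 q : V -> R) x :
  (forall q, A q -> sublinear q /\ forall x, q x <= q0 x) ->
  A q -> inf [set q x | q in A] <= q x.
Proof.
move=> hA Aq; apply: ge_inf; last by exists q.
exists (- q0 (- x)) => _ [q' Aq' <-]; have [sq' le_q'] := hA q' Aq'.
by apply: le_trans (sublinear_ge_oppN x sq'); rewrite lerN2.
Qed.

Lemma sublinear_inf_chain (A : set (V -> R)) (q0 : V -> R) : A !=set0 ->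
  (forall q, A q -> sublinear q /\ forall x, q x <= q0 x) ->
  (forall q q', A q -> A q' -> (forall x, q x <= q' x) \/ (forall x, q' x <= q x)) ->
  sublinear (fun x => inf [set q x | q in A]).
Proof.
move=> [q1 Aq1] hA hchain.
set m := fun x => _.
have m_le x q : A q -> m x <= q x by exact: inf_sublinear_le hA.
have m_ge x c : (forall q, A q -> c <= q x) -> c <= m x.
  move=> hc; apply: lb_le_inf; first by exists (q1 x); exists q1.
  by move=> _ [q Aq <-]; exact: hc.
split.
- move=> x y.
  have h q q' : A q -> A q' -> m (x + y) <= q x + q' y.
    move=> Aq Aq'; have [sq|sq] := hchain q q' Aq Aq'.
    + apply: le_trans (m_le _ _ Aq) _; apply: le_trans ((hA q Aq).1.1 x y) _.
      by rewrite lerD.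
    + apply: le_trans (m_le _ _ Aq') _; apply: le_trans ((hA q' Aq').1.1 x y) _.
      by rewrite lerD.
  have hy q : A q -> m (x + y) - q x <= m y.
    by move=> Aq; apply: (m_ge y) => q' Aq'; have := h q q' Aq Aq'; lra.
  have : m (x + y) - m y <= m x by apply: (m_ge x) => q Aq; have := hy q Aq; lra.
  lra.
- move=> a x; rewrite le_eqVlt => /predU1P[<-|a0].
    rewrite scale0r mul0r; apply/eqP; rewrite eq_le; apply/andP; split.
      by apply: le_trans (m_le 0 q1 Aq1) _; rewrite sublinear0 //; exact: (hA q1 Aq1).1.
    by apply: m_ge => q Aq; rewrite sublinear0 //; exact: (hA q Aq).1.
  apply/eqP; rewrite eq_le; apply/andP; split.
  + rewrite -ler_pdivrMl //; apply: m_ge => q Aq; rewrite ler_pdivrMl //.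
    by rewrite -(hA q Aq).1.2 ?(ltW a0) //; exact: m_le.
  + by apply: m_ge => q Aq; rewrite (hA q Aq).1.2 ?(ltW a0) // ler_wpM2l ?(ltW a0) ?m_le.
Qed.

Lemma minimal_sublinear (q0 : V -> R) : sublinear q0 ->
  exists q, [/\ sublinear q, (forall x, q x <= q0 x) & forall x, q (- x) <= - q x].
Proof.
move=> sub_q0.
pose T := {q : V -> R | sublinear q /\ forall x, q x <= q0 x}.
pose t0 : T := exist _ q0 (conj sub_q0 (fun x => lexx _)).
pose ge_fun (s t : T) := `[< forall x, sval t x <= sval s x >].
have [| | |t t_max] := @ZL_preorder T t0 ge_fun.
- by move=> t; apply/asboolP.
- by move=> r s t /asboolP h1 /asboolP h2; apply/asboolP => x; exact: le_trans (h2 x) (h1 x).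
- move=> C C_chain.
  have [[s0 Cs0]|C0] := pselect (exists s, C s); last first.
    by exists t0 => s Cs; have [] := C0; exists s.
  pose A := [set sval s | s in C].
  have hA q : A q -> sublinear q /\ forall x, q x <= q0 x.
    by move=> [s _ <-]; exact: svalP s.
  have A_chain q q' : A q -> A q' -> (forall x, q x <= q' x) \/ (forall x, q' x <= q x).
    move=> [s Cs <-] [s' Cs' <-].
    by have [/asboolP h|/asboolP h] := C_chain s s' Cs Cs'; [right|left].
  have A0 : A !=set0 by exists (sval s0), s0.
  have sub_m := sublinear_inf_chain A0 hA A_chain.
  set m := fun x => _ in sub_m.
  have m_le x q : A q -> m x <= q x by exact: inf_sublinear_le hA.
  have m_q0 x : m x <= q0 x by exact: le_trans (m_le x _ (imageP _ Cs0)) ((svalP s0).2 x).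
  exists (exist _ m (conj sub_m m_q0)) => s Cs; apply/asboolP => x.
  exact: m_le x _ (imageP _ Cs).
- have [sub_t le_t] := svalP t.
  exists (sval t); split => // x.
  pose s : T := exist _ (shift (sval t) x)
    (conj (shift_sublinear x sub_t) (fun z => le_trans (shift_le_self x sub_t z) (le_t z))).
  have /asboolP t_le_s : ge_fun s t.
    by apply: t_max; apply/asboolP => z; exact: shift_le_self.
  exact: le_trans (t_le_s (- x)) (shift_oppr x sub_t).
Qed.

Lemma hahn_banach (p : V -> R) (x0 : V) : sublinear p ->
  exists u, [/\ linear_form u, (forall x, u x <= p x) & u x0 = p x0].
Proof.
move=> sub_p; have [q [sub_q le_q q_odd]] := minimal_sublinear (shift_sublinear x0 sub_p).
have qN x : q (- x) = - q x.
  by apply/eqP; rewrite eq_le q_odd /=; have := sublinear_ge_oppN x sub_q; lra.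
have qD x y : q (x + y) = q x + q y.
  apply/eqP; rewrite eq_le sub_q.1 /=.
  by have := sub_q.1 (- x) (- y); rewrite -opprD !qN; lra.
have qZ a x : q (a *: x) = a * q x.
  have [a0|a0] := leP 0 a; first by rewrite sub_q.2.
  have := sub_q.2 (- a) x; rewrite scaleNr qN mulNr oppr_ge0 (ltW a0).
  by move=> /(_ isT) /oppr_inj.
have le_p x : q x <= p x by apply: le_trans (le_q x) (shift_le_self x0 sub_p x).
exists q; split => //; first by move=> a x y; rewrite qD qZ.
apply/eqP; rewrite eq_le le_p /=.
by have := le_q (- x0); have := shift_oppr x0 sub_p; rewrite qN; lra.
Qed.

End HahnBanach.

(** * Harmonic Cauchy sequences *)

Lemma natSinv_le (R : archiRealFieldType) (e : R) :
  0 < e -> exists N : nat, (N.+1%:R^-1 : R) <= e.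
Proof.
move=> e0; have [N _ hN] := near_infty_natSinv_lt (PosNum e0).
by exists N; apply: ltW; apply: hN => /=.
Qed.

Lemma lef_natSinv {R : numFieldType} m n : (m <= n)%N -> (n.+1%:R^-1 : R) <= m.+1%:R^-1.
Proof. by move=> mn; rewrite lef_pV2 ?posrE ?ltr0Sn // ler_nat ltnS. Qed.

Section HarmonicCauchy.
Variables (R : realType) (V : completeNormedModType R) (u : nat -> V).
Hypothesis u_cauchy : forall n m, `|u n - u m| <= (n.+1%:R^-1 + m.+1%:R^-1 : R).

Lemma harmonic_cauchy_cvg : cvg (u @ \oo).
Proof.
apply: cauchy_cvg; apply: cauchy_exP => e e0.
have [N hN] := natSinv_le (divr_gt0 e0 (ltr0n R 4)).
exists (u N); exists N => // n /= Nn; rewrite -ball_normE /ball_ /=.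
apply: le_lt_trans (u_cauchy N n) _; have := lef_natSinv (R := R) Nn.
(* [lra] treats terms differing only in their canonical instances as distinct
   atoms; naming them first identifies them. *)
set a := (N.+1%:R^-1 : R) in hN *; set b := (n.+1%:R^-1 : R); lra.
Qed.

Lemma harmonic_cauchy_lim n : `|lim (u @ \oo) - u n| <= (n.+1%:R^-1 : R).
Proof.
apply/ler_addgt0Pr => e e0; have e2 : 0 < e / 2 by rewrite divr_gt0.
have [M _ hM] := (cvgrPdist_le _ _).1 harmonic_cauchy_cvg _ e2.
have [N hN] := natSinv_le e2; set K := maxn M N.
have := ler_normD (lim (u @ \oo) - u K) (u K - u n); rewrite addrA subrK.
have := hM K (leq_maxl M N); have := lef_natSinv (R := R) (leq_maxr M N).
have := u_cauchy K n.
set a := `|u K - u n|; set b := `|lim _ - u K|; set c := (K.+1%:R^-1 : R).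
set d := (n.+1%:R^-1 : R); set g := (N.+1%:R^-1 : R) in hN *; lra.
Qed.

End HarmonicCauchy.

(** * Lattice calculus and positive forms in a Banach lattice *)

Section VectorLattice.
Variables (R : realType) (E : normedModType R) (le : E -> E -> Prop).
Hypothesis hE : banach_lattice le.

Lemma lat_refl x : le x x.
Proof. by case: hE => -[]. Qed.

Lemma lat_anti x y : le x y -> le y x -> x = y.
Proof. by case: hE => -[_ [h _]] _ _ _ _; exact: h. Qed.

Lemma lat_trans y x z : le x y -> le y z -> le x z.
Proof. by case: hE => -[_ [_ h]] _ _ _ _; exact: h. Qed.

Lemma lat_addr z x y : le x y -> le (x + z) (y + z).
Proof. by case: hE => _ h _ _ _; exact: h. Qed.

Lemma lat_scale (a : R) x y : 0 <= a -> le x y -> le (a *: x) (a *: y).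
Proof. by case: hE => _ _ h _ _ a0 /h; apply. Qed.

Lemma lat_add a b c d : le a b -> le c d -> le (a + c) (b + d).
Proof.
move=> le_ab le_cd; apply: lat_trans (lat_addr c le_ab) _.
by rewrite addrC (addrC b); exact: lat_addr.
Qed.

Lemma lat_subr_ge0 x y : le x y -> le 0 (y - x).
Proof. by move=> /(lat_addr (- x)); rewrite addrN. Qed.

Lemma lat_opp x y : le x y -> le (- y) (- x).
Proof. by move=> /(lat_addr (- x - y)); rewrite addrA subrr add0r addrCA subrr addr0. Qed.

Lemma lat_addr_ge x y : le 0 y -> le x (x + y).
Proof. by move=> /(lat_addr x); rewrite add0r addrC. Qed.

Lemma lat_sup_exists x y : exists s, is_sup le x y s.
Proof. by case: hE => _ _ _ h _; exact: h. Qed.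

Definition ljoin x y : E := sval (cid (lat_sup_exists x y)).

Lemma ljoinP x y : is_sup le x y (ljoin x y).
Proof. exact: svalP (cid _). Qed.

Lemma ljoin_ge_l x y : le x (ljoin x y).
Proof. by case: (ljoinP x y). Qed.

Lemma ljoin_ge_r x y : le y (ljoin x y).
Proof. by case: (ljoinP x y) => _ []. Qed.

Lemma ljoin_least x y z : le x z -> le y z -> le (ljoin x y) z.
Proof. by case: (ljoinP x y) => _ [_]; apply. Qed.

Lemma ljoin_unique x y s : is_sup le x y s -> ljoin x y = s.
Proof.
move=> [xs [ys s_least]]; apply: lat_anti; first exact: ljoin_least.
by apply: s_least; [exact: ljoin_ge_l | exact: ljoin_ge_r].
Qed.

Lemma ljoinC x y : ljoin x y = ljoin y x.
Proof.
apply: ljoin_unique; split; [exact: ljoin_ge_r | split; [exact: ljoin_ge_l|]].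
by move=> z xz yz; exact: ljoin_least.
Qed.

Lemma ljoinDr z x y : ljoin (x + z) (y + z) = ljoin x y + z.
Proof.
apply: ljoin_unique; split; [exact/lat_addr/ljoin_ge_l | split; [exact/lat_addr/ljoin_ge_r|]].
move=> w xw yw; rewrite -(subrK z w); apply/lat_addr/ljoin_least.
- by have := lat_addr (- z) xw; rewrite addrK.
- by have := lat_addr (- z) yw; rewrite addrK.
Qed.

Lemma ljoinZ (a : R) x y : 0 < a -> ljoin (a *: x) (a *: y) = a *: ljoin x y.
Proof.
move=> a0; have a_neq0 : a != 0 by rewrite gt_eqF.
apply: ljoin_unique; split; [exact: lat_scale (ltW a0) (ljoin_ge_l x y) | split].
  exact: lat_scale (ltW a0) (ljoin_ge_r x y).
move=> w xw yw; rewrite -[w](scalerKV a_neq0); apply: (lat_scale (ltW a0)).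
have ai0 : 0 <= a^-1 by rewrite invr_ge0 ltW.
apply: ljoin_least.
- by rewrite -[x](scalerK a_neq0); exact: lat_scale xw.
- by rewrite -[y](scalerK a_neq0); exact: lat_scale yw.
Qed.

Lemma ljoin_l x y : le y x -> ljoin x y = x.
Proof. by move=> yx; apply: ljoin_unique; split; [exact: lat_refl | split]. Qed.

Definition lpos x := ljoin x 0.
Definition labs x := ljoin x (- x).

Lemma lpos_ge0 x : le 0 (lpos x). Proof. exact: ljoin_ge_r. Qed.

Lemma lpos_ge x : le x (lpos x). Proof. exact: ljoin_ge_l. Qed.

Lemma ge0_lpos x : le 0 x -> lpos x = x. Proof. exact: ljoin_l. Qed.

Lemma le0_lpos x : le x 0 -> lpos x = 0.
Proof. by move=> x0; rewrite /lpos ljoinC ljoin_l. Qed.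

Lemma lposD x y : le (lpos (x + y)) (lpos x + lpos y).
Proof.
apply: ljoin_least; first exact: lat_add (lpos_ge x) (lpos_ge y).
by rewrite -(addr0 0); apply: lat_add; exact: lpos_ge0.
Qed.

Lemma lposZ (a : R) x : 0 <= a -> lpos (a *: x) = a *: lpos x.
Proof.
rewrite le_eqVlt => /predU1P[<-|a0]; first by rewrite !scale0r ge0_lpos //; exact: lat_refl.
by rewrite /lpos -ljoinZ // scaler0.
Qed.

Lemma ljoinE x y : ljoin x y = y + lpos (x - y).
Proof. by rewrite addrC /lpos -ljoinDr subrK add0r. Qed.

Lemma lpos_decomp x : x = lpos x - lpos (- x).
Proof.
have -> : lpos (- x) = lpos x - x by rewrite /lpos -[RHS]ljoinDr subrr add0r ljoinC.
by rewrite opprB addrCA subrr addr0.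
Qed.

Lemma labs_ge x : le x (labs x). Proof. exact: ljoin_ge_l. Qed.

Lemma labs_geN x : le (- x) (labs x). Proof. exact: ljoin_ge_r. Qed.

Lemma labs_ge0 x : le 0 (labs x).
Proof.
have h2 : le 0 (2%:R *: labs x).
  by rewrite -(subrr x) scaler_nat mulr2n; exact: lat_add (labs_ge x) (labs_geN x).
have half_ge0 : 0 <= (2%:R : R)^-1 by rewrite invr_ge0 ler0n.
by have := lat_scale half_ge0 h2; rewrite scaler0 scalerA mulVf ?pnatr_eq0 // scale1r.
Qed.

Lemma labsN x : labs (- x) = labs x.
Proof. by rewrite /labs opprK ljoinC. Qed.

Lemma ge0_labs x : le 0 x -> labs x = x.
Proof.
move=> x0; apply: ljoin_l.
by have := lat_opp x0; rewrite oppr0 => /lat_trans; apply.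
Qed.

Lemma lat_norm_le x y ax ay : is_sup le x (- x) ax -> is_sup le y (- y) ay ->
  le ax ay -> `|x| <= `|y|.
Proof. by case: hE => _ _ _ _; apply. Qed.

Lemma ge0_labs_is_sup x : le 0 x -> is_sup le x (- x) x.
Proof. by move=> x0; rewrite -{3}(ge0_labs x0); exact: ljoinP. Qed.

Lemma norm_lat_mono x y : le 0 x -> le x y -> `|x| <= `|y|.
Proof.
move=> x0 xy; have y0 := lat_trans x0 xy.
exact: lat_norm_le (ge0_labs_is_sup x0) (ge0_labs_is_sup y0) xy.
Qed.

Lemma norm_labs x : `|labs x| = `|x|.
Proof.
have labs2P := ge0_labs_is_sup (labs_ge0 x).
apply/eqP; rewrite eq_le; apply/andP; split.
- exact: lat_norm_le labs2P (ljoinP x (- x)) (lat_refl _).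
- exact: lat_norm_le (ljoinP x (- x)) labs2P (lat_refl _).
Qed.

Lemma ljoinB_le a b c d :
  le (ljoin a b - ljoin c d) (labs (a - c) + labs (b - d)).
Proof.
rewrite -(addrK (ljoin c d) (labs (a - c) + labs (b - d))).
apply: lat_addr; apply: ljoin_least.
- have := lat_add (labs_ge (a - c))
    (lat_trans (ljoin_ge_l c d) (lat_addr_ge _ (labs_ge0 (b - d)))).
  by rewrite subrK (addrC (ljoin c d)) addrA.
- have := lat_add (labs_ge (b - d))
    (lat_trans (ljoin_ge_r c d) (lat_addr_ge _ (labs_ge0 (a - c)))).
  by rewrite subrK (addrC (ljoin c d)) addrCA addrA.
Qed.

Lemma ljoin_lipschitz a b c d : `|ljoin a b - ljoin c d| <= `|a - c| + `|b - d|.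
Proof.
have le_sum : le (labs (ljoin a b - ljoin c d)) (labs (a - c) + labs (b - d)).
  apply: ljoin_least; first exact: ljoinB_le.
  by rewrite opprB -labsN opprB -(labsN (b - d)) opprB; exact: ljoinB_le.
rewrite -norm_labs; apply: le_trans (norm_lat_mono (labs_ge0 _) le_sum) _.
by apply: le_trans (ler_normD _ _) _; rewrite !norm_labs.
Qed.

Definition positive_form (w : E -> R) :=
  linear_form w /\ forall x, le 0 x -> 0 <= w x.

Definition form_le (w v : E -> R) := forall x, le 0 x -> w x <= v x.

Lemma positive_form_mono w x y : positive_form w -> le x y -> w x <= w y.
Proof.
by move=> [lin_w w_ge0] /lat_subr_ge0 /w_ge0; rewrite (linear_formB lin_w) subr_ge0.
Qed.

Lemma positive_form_labs w x : positive_form w -> `|w x| <= w (labs x).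
Proof.
move=> w_pos; rewrite ler_norml; apply/andP; split.
- by rewrite lerNl -(linear_formN w_pos.1); exact: positive_form_mono (labs_geN x).
- exact: positive_form_mono (labs_ge x).
Qed.

Lemma riesz_split y d : positive_form y -> exists u v,
  [/\ positive_form u, positive_form v, (forall x, u x + v x = y x),
      u (lpos (- d)) = 0 & v (lpos d) = 0].
Proof.
move=> [lin_y y_ge0]; have y_pos : positive_form y by [].
pose p x := y (lpos x).
have sub_p : sublinear p.
  split=> [x z|a x a0]; last by rewrite /p lposZ // (linear_formZ lin_y).
  by rewrite /p -(linear_formD lin_y); exact: positive_form_mono (lposD x z).
have [u [lin_u u_le ud]] := hahn_banach d sub_p.
have u_ge0 x : le 0 x -> 0 <= u x.
  move=> x0; have := u_le (- x); rewrite /p le0_lpos.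
    by rewrite (linear_formN lin_u) (linear_form0 lin_y) oppr_le0.
  by have := lat_opp x0; rewrite oppr0.
have u_le_y x : le 0 x -> u x <= y x by move=> x0; have := u_le x; rewrite /p ge0_lpos.
pose v x := y x - u x.
have v_pos : positive_form v.
  split=> [a x z|x x0]; first by rewrite /v lin_y lin_u; ring.
  by rewrite /v subr_ge0 u_le_y.
have u_lpos : u (lpos d) <= y (lpos d) by exact: u_le_y (lpos_ge0 d).
have u_lposN := u_ge0 _ (lpos_ge0 (- d)).
have := congr1 u (lpos_decomp d); rewrite (linear_formB lin_u) ud /p => ud'.
exists u, v; split => //; first by move=> x; rewrite /v addrC subrK.
- lra.
- rewrite /v; lra.
Qed.

Lemma positive_form_ljoin w a b : positive_form w -> w (lpos (b - a)) = 0 ->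
  w (ljoin a b) = Num.max (w a) (w b).
Proof.
move=> [lin_w w_ge0] w_lpos.
have w_ab : w a - w b = w (lpos (a - b)).
  rewrite -(linear_formB lin_w) {1}(lpos_decomp (a - b)) opprB.
  by rewrite (linear_formB lin_w) w_lpos subr0.
rewrite ljoinE (linear_formD lin_w) -w_ab addrC subrK max_l //.
by rewrite -subr_ge0 w_ab; exact/w_ge0/lpos_ge0.
Qed.

Lemma form_le_trans v u w : form_le u v -> form_le v w -> form_le u w.
Proof. by move=> uv vw x x0; exact: le_trans (uv x x0) (vw x x0). Qed.

Definition below (P : (E -> R) -> Prop) (w : E -> R) :=
  forall v, positive_form v -> form_le v w -> P v.

Lemma below_le P w v : below P w -> form_le v w -> below P v.
Proof. by move=> Pw vw v' v'_pos v'v; apply: Pw (form_le_trans v'v vw). Qed.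

Definition decomposable (A : (E -> R) -> Prop) (y : E -> R) :=
  exists (I : finType) (w : I -> E -> R),
    (forall i, positive_form (w i) /\ A (w i)) /\ forall x, \sum_i w i x = y x.

Lemma decomposable_self (A : (E -> R) -> Prop) y :
  positive_form y -> A y -> decomposable A y.
Proof. by move=> y_pos Ay; exists 'I_1, (fun=> y); split=> // x; rewrite big_ord1. Qed.

Lemma decomposable_impl (A B : (E -> R) -> Prop) y :
  (forall w, positive_form w -> A w -> B w) -> decomposable A y -> decomposable B y.
Proof.
move=> AB [I [w [hw sum_w]]]; exists I, w; split=> // i.
by have [w_pos Aw] := hw i; split=> //; exact: AB.
Qed.

Lemma decomposable_le (A : (E -> R) -> Prop) y :
  decomposable A y -> decomposable (fun w => A w /\ form_le w y) y.
Proof.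
move=> [I [w [hw sum_w]]]; exists I, w; split=> // i.
have [w_pos Aw] := hw i; split=> //; split=> // x x0.
rewrite -sum_w (bigD1 i) //= lerDl; apply: sumr_ge0 => j _.
exact: (hw j).1.2.
Qed.

Lemma decomposable_bind (A B : (E -> R) -> Prop) y : decomposable A y ->
  (forall w, positive_form w -> A w -> decomposable B w) -> decomposable B y.
Proof.
move=> [I [w [hw sum_w]]] AB.
have /choice [D hD] : forall i, exists D : {J : finType & J -> E -> R},
    (forall j, positive_form (projT2 D j) /\ B (projT2 D j)) /\
    forall x, \sum_j projT2 D j x = w i x.
  move=> i; have [w_pos Aw] := hw i; have [J [v hv]] := AB _ w_pos Aw.
  by exists (existT _ J v).
exists {i : I & projT1 (D i)}, (fun p => projT2 (D (tag p)) (tagged p)); split.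
  by move=> [i j]; exact: (hD i).1.
move=> x; rewrite -sum_w.
rewrite -(sig_big_dep xpredT (fun _ _ => true) (fun i j => projT2 (D i) j x)) /=.
by apply: eq_bigr => i _; exact: (hD i).2.
Qed.

Lemma decomposable_below (P Q : (E -> R) -> Prop) y : decomposable (below P) y ->
  (forall w, positive_form w -> decomposable (below Q) w) ->
  decomposable (below (fun v => P v /\ Q v)) y.
Proof.
move=> decP decQ; apply: (decomposable_bind decP) => w w_pos Pw.
apply: decomposable_impl (decomposable_le (decQ w w_pos)) => v v_pos [Qv vw] v' v'_pos v'v.
by split; [exact: (below_le Pw vw) v' v'_pos v'v | exact: Qv v' v'_pos v'v].
Qed.

Lemma ljoin_decomposable a b y : positive_form y ->
  decomposable (below (fun w => w (ljoin a b) = Num.max (w a) (w b))) y.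
Proof.
move=> y_pos; have [u [v [u_pos v_pos uv u0 v0]]] := riesz_split (a - b) y_pos.
have killed w z e : positive_form w -> form_le w z -> z (lpos e) = 0 -> w (lpos e) = 0.
  move=> w_pos wz z0; apply/eqP; rewrite eq_le (w_pos.2 _ (lpos_ge0 _)) andbT.
  by rewrite -z0; exact: wz (lpos_ge0 _).
exists bool; exists (fun i : bool => if i then u else v).
split; last by move=> x; rewrite big_bool /= uv.
case; split=> // w w_pos wz.
- apply: positive_form_ljoin => //; apply: (killed _ u _ w_pos wz).
  by rewrite -opprB.
- rewrite ljoinC maxC; apply: positive_form_ljoin => //.
  exact: (killed _ v _ w_pos wz v0).
Qed.

Inductive lterm :=
  | LVar of E
  | LAdd of lterm & lterm
  | LScale of R & lterm
  | LJoin of lterm & lterm.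

Fixpoint lterm_eval t : E :=
  match t with
  | LVar x => x
  | LAdd t1 t2 => lterm_eval t1 + lterm_eval t2
  | LScale a t1 => a *: lterm_eval t1
  | LJoin t1 t2 => ljoin (lterm_eval t1) (lterm_eval t2)
  end.

Fixpoint lterm_evalR (w : E -> R) t : R :=
  match t with
  | LVar x => w x
  | LAdd t1 t2 => lterm_evalR w t1 + lterm_evalR w t2
  | LScale a t1 => a * lterm_evalR w t1
  | LJoin t1 t2 => Num.max (lterm_evalR w t1) (lterm_evalR w t2)
  end.

Definition lterm_hom t (w : E -> R) := w (lterm_eval t) = lterm_evalR w t.

Lemma lterm_decomposable t y : positive_form y -> decomposable (below (lterm_hom t)) y.
Proof.
elim: t y => [x|t1 IH1 t2 IH2|a t1 IH|t1 IH1 t2 IH2] y y_pos.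
- by apply: decomposable_self => // v.
- apply: decomposable_impl (decomposable_below (IH1 y y_pos) IH2).
  move=> w _ hw v v_pos vw; have [h1 h2] := hw v v_pos vw.
  by rewrite /lterm_hom /= (linear_formD v_pos.1) h1 h2.
- apply: decomposable_impl (IH y y_pos) => w _ hw v v_pos vw.
  by rewrite /lterm_hom /= (linear_formZ v_pos.1) (hw v v_pos vw).
- have dec12 := decomposable_below (IH1 y y_pos) IH2.
  have decj := ljoin_decomposable (lterm_eval t1) (lterm_eval t2).
  apply: decomposable_impl (decomposable_below dec12 decj).
  move=> w _ hw v v_pos vw; have [[h1 h2] hj] := hw v v_pos vw.
  by rewrite /lterm_hom /= hj h1 h2.
Qed.

Lemma norming_positive_form z : exists u,
  [/\ positive_form u, (forall x, u (labs x) <= `|x|) & u (labs z) = `|z|].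
Proof.
pose p x := `|lpos x|.
have sub_p : sublinear p.
  split=> [x y|a x a0]; last by rewrite /p lposZ // normrZ ger0_norm.
  apply: le_trans (ler_normD _ _); exact: norm_lat_mono (lpos_ge0 _) (lposD x y).
have p_labs x : p (labs x) = `|x| by rewrite /p ge0_lpos ?norm_labs //; exact: labs_ge0.
have [u [lin_u u_le uz]] := hahn_banach (labs z) sub_p.
exists u; split; last by rewrite uz p_labs.
- split=> // x x0; have := u_le (- x); rewrite /p le0_lpos ?normr0.
    by rewrite (linear_formN lin_u) oppr_le0.
  by have := lat_opp x0; rewrite oppr0.
- by move=> x; rewrite -p_labs.
Qed.

End VectorLattice.

(** * The free Banach lattice *)

Lemma sum_enum_val (R : nmodType) (I : finType) (G : I -> R) :
  \sum_i G i = \sum_(k < #|I|) G (enum_val k).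
Proof. by rewrite -big_enum_val; apply: eq_bigl => i; rewrite inE. Qed.

Section FBLNorm.
Variables (R : realType) (E : normedModType R).
Implicit Types f g h : dual E -> R.

Lemma fbl_norm_ge_family (I : finType) (w : I -> E -> R) (F : (E -> R) -> R) :
  (forall i, is_dual (w i)) -> (forall x, `|x| <= 1 -> \sum_i `|w i x| <= 1) ->
  ((\sum_i `|F (w i)|)%:E <= fbl_norm (fun xs : dual E => F (sval xs)))%E.
Proof.
move=> w_dual w_sum; pose xs (k : 'I_#|I|) : dual E := exist _ (w (enum_val k)) (w_dual _).
apply: ereal_sup_ubound; exists #|I|, xs; split=> [x x1|]; rewrite /xs /=.
  by rewrite -(sum_enum_val (fun i => `|w i x|)); exact: w_sum.
by rewrite sum_enum_val.
Qed.

Lemma fbl_norm_le_lincomb f g h (c1 c2 b1 b2 : R) : 0 <= c1 -> 0 <= c2 ->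
  (forall xs, `|f xs| <= c1 * `|g xs| + c2 * `|h xs|) ->
  (fbl_norm g <= b1%:E)%E -> (fbl_norm h <= b2%:E)%E ->
  (fbl_norm f <= (c1 * b1 + c2 * b2)%:E)%E.
Proof.
move=> c1_ge0 c2_ge0 fgh gb1 hb2; apply: ge_ereal_sup => _ [n [xs [xs1 ->]]].
have sum_le k b : (fbl_norm k <= b%:E)%E -> \sum_(i < n) `|k (xs i)| <= b.
  move=> kb; rewrite -lee_fin; apply: le_trans kb.
  by apply: ereal_sup_ubound; exists n, xs.
rewrite lee_fin; apply: le_trans (ler_sum _ (fun i _ => fgh (xs i))) _.
rewrite big_split /= -!mulr_sumr.
by apply: lerD; apply: ler_wpM2l => //; exact: sum_le.
Qed.

Lemma fbl_norm_le0 f : (forall xs, f xs = 0) -> (fbl_norm f <= 0%:E)%E.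
Proof.
move=> f0; apply: ge_ereal_sup => _ [n [xs [_ ->]]].
by rewrite lee_fin big1 // => i _; rewrite f0 normr0.
Qed.

Definition fbl_dist f g := fbl_norm (fun xs => f xs - g xs).

Lemma fbl_distC f g : fbl_dist f g = fbl_dist g f.
Proof.
rewrite /fbl_dist /fbl_norm; congr ereal_sup; apply/seteqP.
by split=> _ [n [xs [xs1 ->]]]; exists n, xs; split=> //; under eq_bigr do rewrite distrC.
Qed.

Lemma fbl_dist_triangle f g h b1 b2 :
  (fbl_dist f g <= b1%:E)%E -> (fbl_dist g h <= b2%:E)%E -> (fbl_dist f h <= (b1 + b2)%:E)%E.
Proof.
move=> fg gh; have := fbl_norm_le_lincomb ler01 ler01 _ fg gh.
by rewrite !mul1r; apply=> xs; rewrite !mul1r -(subrKA (g xs)); exact: ler_normD.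
Qed.

End FBLNorm.

Section FBLTerms.
Variables (R : realType) (E : normedModType R) (le : E -> E -> Prop).
Hypothesis hE : banach_lattice le.

Definition lterm_fun (t : lterm E) : dual E -> R := fun xs => lterm_evalR (sval xs) t.

Lemma norm_lterm_le_fbl_norm t : (`|lterm_eval hE t|%:E <= fbl_norm (lterm_fun t))%E.
Proof.
set z := lterm_eval hE t.
have [u [u_pos u_labs uz]] := norming_positive_form hE z.
(* [LJoin t (LScale (-1) t)] is the lattice term |t|. *)
have := lterm_decomposable hE (LJoin t (LScale (-1) t)) u_pos.
move=> /decomposable_le [I [w [hw sum_w]]].
have w_pos i := (hw i).1.
have w_le x i : `|w i x| <= w i (labs hE x) := positive_form_labs hE x (w_pos i).
have w_labs i : w i (labs hE z) = `|lterm_evalR (w i) t|.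
  have := (hw i).2.1 (w i) (w_pos i) (fun x _ => lexx _).
  by rewrite /lterm_hom /= scaleN1r mulN1r maxrN.
have sum_labs x : \sum_i w i (labs hE x) <= `|x|.
  by rewrite sum_w; exact: u_labs.
rewrite -uz -sum_w; under eq_bigr do rewrite w_labs.
apply: (fbl_norm_ge_family (fun v => lterm_evalR v t)) => [i|x x1].
- split; first exact: (w_pos i).1.
  exists 1 => x; rewrite mul1r; apply: le_trans (w_le x i) _.
  apply: le_trans (sum_labs x); rewrite (bigD1 i) //= lerDl.
  by apply: sumr_ge0 => j _; exact: (w_pos j).2 _ (labs_ge0 hE x).
- apply: le_trans (ler_sum _ (fun i _ => w_le x i)) _.
  exact: le_trans (sum_labs x) x1.
Qed.

Lemma norm_ltermB_le t1 t2 b : (fbl_dist (lterm_fun t1) (lterm_fun t2) <= b%:E)%E ->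
  `|lterm_eval hE t1 - lterm_eval hE t2| <= b.
Proof.
move=> t12; rewrite -lee_fin; apply: le_trans _ t12.
have := norm_lterm_le_fbl_norm (LAdd t1 (LScale (-1) t2)); rewrite /= scaleN1r.
suff -> : lterm_fun (LAdd t1 (LScale (-1) t2)) =
  fun xs => lterm_fun t1 xs - lterm_fun t2 xs by [].
by apply/funext => xs; rewrite /lterm_fun /= mulN1r.
Qed.

End FBLTerms.

Lemma max_lipschitz (R : realDomainType) (a b c d : R) :
  `|Num.max a b - Num.max c d| <= `|a - c| + `|b - d|.
Proof.
have := ler_norm (a - c); have := ler_norm (b - d).
have := ler_norm (c - a); have := ler_norm (d - b); rewrite (distrC c) (distrC d).
rewrite ler_norml /Num.max; case: ifP => ab; case: ifP => cd; lra.
Qed.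

Section FBLApprox.
Variables (R : realType) (E : normedModType R) (le : E -> E -> Prop).
Hypothesis hE : banach_lattice le.
Implicit Types f g : dual E -> R.
Local Notation eval := (lterm_eval hE).

(* The graph of the continuous extension of [delta x |-> x] to the closure of
   the lattice expressions. *)
Definition fbl_approx f x := forall e, 0 < e -> exists t,
  (fbl_dist f (lterm_fun t) <= e%:E)%E /\ `|x - eval t| <= e.

Lemma fbl_approx_unique f x y : fbl_approx f x -> fbl_approx f y -> x = y.
Proof.
move=> fx fy; apply/eqP; rewrite -subr_eq0 -normr_le0; apply/ler_addgt0Pr => e e0.
have e4 : 0 < e / 4 by rewrite divr_gt0.
have [t1 [ft1 xt1]] := fx _ e4; have [t2 [ft2 yt2]] := fy _ e4.
rewrite fbl_distC in ft1; have t12 := norm_ltermB_le hE (fbl_dist_triangle ft1 ft2).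
have := ler_normD (x - eval t1) (eval t1 - eval t2 + (eval t2 - y)).
have := ler_normD (eval t1 - eval t2) (eval t2 - y).
rewrite distrC in yt2; rewrite !addrA !subrK; lra.
Qed.

Lemma fbl_approx_add f g x y : fbl_approx f x -> fbl_approx g y ->
  fbl_approx (fun xs => f xs + g xs) (x + y).
Proof.
move=> fx gy e e0; have e2 : 0 < e / 2 by rewrite divr_gt0.
have [t1 [ft1 xt1]] := fx _ e2; have [t2 [gt2 yt2]] := gy _ e2.
exists (LAdd t1 t2); split.
- have := fbl_norm_le_lincomb ler01 ler01 _ ft1 gt2; rewrite !mul1r -splitr.
  by apply=> xs; rewrite !mul1r /lterm_fun /= opprD addrACA; exact: ler_normD.
- rewrite /= opprD addrACA (splitr e); apply: le_trans (ler_normD _ _) _.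
  exact: lerD.
Qed.

Lemma fbl_approx_scale f x (a : R) : fbl_approx f x ->
  fbl_approx (fun xs => a * f xs) (a *: x).
Proof.
move=> fx e e0; have ea : 0 < e / (`|a| + 1) by rewrite divr_gt0 // ltr_wpDl.
have small : `|a| * (e / (`|a| + 1)) <= e.
  rewrite mulrA ler_pdivrMr ?ltr_wpDl // mulrDr mulr1 mulrC lerDl; exact: ltW.
have [t [ft xt]] := fx _ ea; exists (LScale a t); split.
- apply: (@le_trans _ _ (`|a| * (e / (`|a| + 1)))%:E); last by rewrite lee_fin.
  have := fbl_norm_le_lincomb (normr_ge0 a) (lexx 0) _ ft ft; rewrite mul0r addr0.
  by apply=> xs; rewrite mul0r addr0 /lterm_fun /= -mulrBr normrM.
- rewrite /= -scalerBr normrZ; apply: le_trans small.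
  exact: ler_wpM2l.
Qed.

Lemma fbl_approx_join f g x y : fbl_approx f x -> fbl_approx g y ->
  fbl_approx (fun xs => Num.max (f xs) (g xs)) (ljoin hE x y).
Proof.
move=> fx gy e e0; have e2 : 0 < e / 2 by rewrite divr_gt0.
have [t1 [ft1 xt1]] := fx _ e2; have [t2 [gt2 yt2]] := gy _ e2.
exists (LJoin t1 t2); split.
- have := fbl_norm_le_lincomb ler01 ler01 _ ft1 gt2; rewrite !mul1r -splitr.
  by apply=> xs; rewrite !mul1r; exact: max_lipschitz.
- apply: le_trans (ljoin_lipschitz hE _ _ _ _) _.
  by rewrite (splitr e) lerD.
Qed.

Lemma fbl_approx_delta x : fbl_approx (delta x) x.
Proof.
move=> e e0; exists (LVar x); split; last by rewrite /= subrr normr0 ltW.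
by apply: le_trans (fbl_norm_le0 _) _; [move=> xs; exact: subrr | rewrite lee_fin ltW].
Qed.

End FBLApprox.

Section FBLProjection.
Variables (R : realType) (E : completeNormedModType R) (le : E -> E -> Prop).
Hypothesis hE : banach_lattice le.
Implicit Types f g : dual E -> R.

Lemma fbl_approx_exists f :
  (forall e, 0 < e -> exists t, (fbl_dist f (lterm_fun t) <= e%:E)%E) ->
  exists x, fbl_approx hE f x.
Proof.
move=> f_approx.
have /choice [t ht] n : exists t, (fbl_dist f (lterm_fun t) <= (n.+1%:R^-1 : R)%:E)%E.
  by apply: f_approx; rewrite invr_gt0 ltr0Sn.
have t_cauchy n m : `|lterm_eval hE (t n) - lterm_eval hE (t m)| <= n.+1%:R^-1 + m.+1%:R^-1.
  by apply: norm_ltermB_le; apply: fbl_dist_triangle (ht m); rewrite fbl_distC.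
exists (lim ((fun n => lterm_eval hE (t n)) @ \oo)) => e e0.
have [N hN] := natSinv_le e0; exists (t N); split.
- by apply: le_trans (ht N) _; rewrite lee_fin.
- exact: le_trans (harmonic_cauchy_lim t_cauchy N) hN.
Qed.

Lemma fbl_approx_closed : fbl_closed (fun f => exists x, fbl_approx hE f x).
Proof.
split.
- by move=> x; exists x; exact: fbl_approx_delta.
- by move=> f g [x fx] [y gy]; exists (x + y); exact: fbl_approx_add.
- by move=> a f [x fx]; exists (a *: x); exact: fbl_approx_scale.
- by move=> f g [x fx] [y gy]; exists (ljoin hE x y); exact: fbl_approx_join.
- move=> f _ f_lim; apply: fbl_approx_exists => e e0.
  have e2 : 0 < e / 2 by rewrite divr_gt0.
  have [g [[x gx] fg]] := f_lim _ e2; have [t [gt _]] := gx _ e2.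
  by exists t; rewrite (splitr e); exact: fbl_dist_triangle (ltW fg) gt.
Qed.

(* Junk value [0] outside the closure of the lattice expressions. *)
Definition fbl_proj f : E := xget 0 (fbl_approx hE f).

Lemma fbl_projE f x : fbl_approx hE f x -> fbl_proj f = x.
Proof. by move=> fx; apply: fbl_approx_unique (xgetPex 0 (ex_intro _ x fx)) fx. Qed.

Lemma FBL_fbl_approx f : FBL f -> fbl_approx hE f (fbl_proj f).
Proof. by move=> [_ /(_ _ fbl_approx_closed) [x fx]]; rewrite (fbl_projE fx). Qed.

End FBLProjection.

Theorem corollary2p5 (R : realType) (E : completeNormedModType R)
    (le : E -> E -> Prop) (hE : banach_lattice le) :
  exists P : (dual E -> R) -> E,
    [/\ (forall f g, FBL f -> FBL g -> P (fun xs => f xs + g xs) = P f + P g),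
        (forall (a : R) f, FBL f -> P (fun xs => a * f xs) = a *: P f),
        (forall f g, FBL f -> FBL g ->
           is_sup le (P f) (P g) (P (fun xs => Num.max (f xs) (g xs)))) &
        (forall x : E, P (delta x) = x)].
Proof.
exists (fbl_proj hE); split.
- move=> f g /(FBL_fbl_approx hE) fx /(FBL_fbl_approx hE) gy.
  exact/fbl_projE/fbl_approx_add.
- by move=> a f /(FBL_fbl_approx hE) fx; exact/fbl_projE/fbl_approx_scale.
- move=> f g /(FBL_fbl_approx hE) fx /(FBL_fbl_approx hE) gy.
  by rewrite (fbl_projE (fbl_approx_join fx gy)); exact: ljoinP.
- by move=> x; exact/fbl_projE/fbl_approx_delta.
Qed.
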